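(* Let $R$ be a commutative ring with $1$ and $I$ an ideal of $R$ which is not contained in any minimal prime ideal of $R$. If $I$ is a projective $R$-module, then $I$ is a finitely generated ideal. *)

From HB Require Import structures.
From mathcomp Require Import all_boot all_order all_algebra.
Set Implicit Arguments. Unset Strict Implicit. Unset Printing Implicit Defensive.
Import GRing.Theory.
Local Open Scope ring_scope.

Definition is_ideal (R : comPzRingType) (I : R -> Prop) : Prop :=
  [/\ I 0, (forall x y, I x -> I y -> I (x + y))
    & (forall a x, I x -> I (a * x))].

Definition prime_ideal (R : comPzRingType) (P : R -> Prop) : Prop :=
  [/\ is_ideal P, ~ P 1 & (forall a b, P (a * b) -> P a \/ P b)].

Definition minimal_prime (R : comPzRingType) (P : R -> Prop) : Prop :=
  prime_ideal P /\
  (forall Q : R -> Prop, prime_ideal Q -> (forall x, Q x -> P x) ->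
     forall x, P x -> Q x).

Definition fg_ideal (R : comPzRingType) (I : R -> Prop) : Prop :=
  exists (n : nat) (g : 'I_n -> R), (forall i, I (g i)) /\
    (forall x, I x -> exists c : 'I_n -> R, x = \sum_(i < n) c i * g i).

(* h : I -> M is R-linear, where I is viewed as a submodule of R;
   h is given as a function on R whose values outside I are irrelevant. *)
Definition ideal_linear (R : comPzRingType) (I : R -> Prop) (M : lmodType R)
  (h : R -> M) : Prop :=
  (forall x y, I x -> I y -> h (x + y) = h x + h y) /\
  (forall a x, I x -> h (a * x) = a *: h x).

Definition projective_ideal (R : comPzRingType) (I : R -> Prop) : Prop :=
  forall (M N : lmodType R) (f : {linear M -> N}),
    (forall n : N, exists m : M, f m = n) ->
    forall g : R -> N, ideal_linear I g ->
      exists h : R -> M, ideal_linear I h /\ (forall x, I x -> f (h x) = g x).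

From HB Require Import structures.
From mathcomp Require Import all_boot all_order all_algebra.
From mathcomp Require Import finmap.
From mathcomp.multinomials Require Import monalg.
From mathcomp Require Import boolp classical_sets.
From mathcomp Require Import ring.
Set Implicit Arguments. Unset Strict Implicit. Unset Printing Implicit Defensive.
Import GRing.Theory.
Local Open Scope ring_scope.
Local Open Scope classical_set_scope.

(* Projectivity of I gives, by the dual basis lemma, functions phi_k that are
   R-linear on I and elements e_k of I with x = sum_k phi_k(x) e_k for x in I.
   Let T be the trace ideal, generated by the values phi_k(y), y in I.  If
   1 = sum r_i phi_(k_i)(y_i) lies in T, the y_i generate I.  Otherwise 1 - T
   is a multiplicative set avoiding 0, so the complement of a maximal such set
   containing it is a minimal prime P disjoint from 1 - T.  Each a in I
   satisfies (1 - t) a^2 = 0 for t = sum_k phi_k(e_k) in T, so a lies in P,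
   i.e. I is contained in the minimal prime P. *)

Definition dual_basis (R : comPzRingType) (I : R -> Prop) (K : Type)
    (e : K -> R) (phi : K -> R -> R) : Prop :=
  [/\ forall k, I (e k),
      forall k a x, I x -> phi k (a * x) = a * phi k x
    & forall x, I x -> exists s : seq K, x = \sum_(k <- s) phi k x * e k].

Section IdealSubmodule.
Variables (R : comNzRingType) (I : R -> Prop).
Hypothesis idealI : is_ideal I.

Definition ideal_pred : {pred R^o} := fun x => `[< I x >].

Lemma ideal_submod_closed : GRing.submod_closed ideal_pred.
Proof.
case: idealI => I0 ID IM; split=> [|a x y /asboolP Ix /asboolP Iy].
  exact/asboolP.
by apply/asboolP/ID => //; apply: IM.
Qed.

HB.instance Definition _ :=
  GRing.isSubmodClosed.Build R R^o ideal_pred ideal_submod_closed.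

Record ideal_sub := IdealSub { ideal_val :> R^o; _ : ideal_val \in ideal_pred }.
HB.instance Definition _ := [isSub for ideal_val].
HB.instance Definition _ := [Choice of ideal_sub by <:].
HB.instance Definition _ := [SubChoice_isSubLmodule of ideal_sub by <:].

Definition free_sum (m : {malg R[ideal_sub]}) : ideal_sub :=
  \sum_(k <- msupp m) m@_k *: k.

Lemma free_sumEw (d : {fset ideal_sub}) m : (msupp m `<=` d)%fset ->
  free_sum m = \sum_(k <- d) m@_k *: k.
Proof.
move=> le_md; apply: big_fset_incl => // k _ /mcoeff_outdom ->.
by rewrite scale0r.
Qed.

Lemma free_sum_is_linear : linear free_sum.
Proof.
move=> a m m'; pose d := (msupp m `|` msupp m')%fset.
have le_m : (msupp m `<=` d)%fset := fsubsetUl _ _.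
have le_m' : (msupp m' `<=` d)%fset := fsubsetUr _ _.
have le_sum : (msupp (a *: m + m') `<=` d)%fset.
  apply: fsubset_trans (msuppD_le _ _) _.
  by apply: fsetSU; apply: msuppZ_le.
rewrite (free_sumEw le_sum) (free_sumEw le_m) (free_sumEw le_m').
rewrite scaler_sumr -big_split; apply: eq_bigr => k _ /=.
by rewrite mcoeffD mcoeffZ scalerDl scalerA.
Qed.

HB.instance Definition _ :=
  GRing.isLinear.Build R {malg R[ideal_sub]} ideal_sub *:%R free_sum
    free_sum_is_linear.

Lemma free_sum_surj (n : ideal_sub) : exists m, free_sum m = n.
Proof.
exists << 1 *g n >>.
by rewrite (free_sumEw msuppU_le) big_seq_fset1 mcoeffUU scale1r.
Qed.

Definition ideal_incl (x : R) : ideal_sub := insubd 0 x.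

Lemma ideal_inclK x : I x -> ideal_val (ideal_incl x) = x.
Proof. by move=> Ix; rewrite val_insubd ifT //; exact: asboolT. Qed.

Lemma ideal_incl_linear : ideal_linear I ideal_incl.
Proof.
case: idealI => _ ID IM; split=> [x y Ix Iy|a x Ix]; apply: val_inj.
  by rewrite raddfD /= !ideal_inclK //; apply: ID.
by rewrite linearZ /= !ideal_inclK //; apply: IM.
Qed.

Lemma projective_ideal_dual_basis_nz : projective_ideal I ->
  exists (K : eqType) (e : K -> R) (phi : K -> R -> R), dual_basis I e phi.
Proof.
move=> projI.
have [h [[_ hZ] h_lifts]] :=
  projI _ _ free_sum free_sum_surj _ ideal_incl_linear.
exists ideal_sub, ideal_val, (fun k x => (h x)@_k); split.
- by move=> k; apply/asboolP/(valP k).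
- by move=> k a x Ix; rewrite hZ // mcoeffZ.
move=> x Ix; exists (msupp (h x)).
rewrite -{1}(ideal_inclK Ix) -h_lifts // /free_sum -[ideal_val _]/(val _).
rewrite raddf_sum.
by apply: eq_bigr => k _.
Qed.

End IdealSubmodule.

(* Free modules {malg R[K]} are only available over nontrivial rings. *)
Section NonzeroAlias.
Variables (R : comPzRingType) (oner_neq0 : (1 : R) != 0).

Definition nonzero_ring : Type := R.
HB.instance Definition _ := GRing.ComPzRing.on nonzero_ring.
HB.instance Definition _ :=
  GRing.PzSemiRing_isNonZero.Build nonzero_ring oner_neq0.

Lemma projective_ideal_dual_basis_neq0 (I : R -> Prop) :
  is_ideal I -> projective_ideal I ->
  exists (K : eqType) (e : K -> R) (phi : K -> R -> R), dual_basis I e phi.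
Proof. exact: (@projective_ideal_dual_basis_nz nonzero_ring). Qed.

End NonzeroAlias.

Lemma projective_ideal_dual_basis (R : comPzRingType) (I : R -> Prop) :
  is_ideal I -> projective_ideal I ->
  exists (K : eqType) (e : K -> R) (phi : K -> R -> R), dual_basis I e phi.
Proof.
move=> idealI projI; have [oner_eq0|oner_neq0] := eqVneq (1 : R) 0; last first.
  exact: projective_ideal_dual_basis_neq0.
have all0 (x : R) : x = 0 by rewrite -[x]mulr1 oner_eq0 mulr0.
exists unit, (fun _ => 0), (fun _ _ => 0); split=> [_|_ a _ _|x _].
- by case: idealI.
- by rewrite mulr0.
- by exists [::]; rewrite big_nil [x]all0.
Qed.

Section DualBasis.
Variables (R : comPzRingType) (I : R -> Prop) (K : eqType).
Variables (e : K -> R) (phi : K -> R -> R).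
Hypothesis basis : dual_basis I e phi.

Lemma dual_basis_swap k x y : I x -> I y -> phi k x * y = phi k y * x.
Proof.
case: basis => _ phiZ _ Ix Iy.
by rewrite mulrC -phiZ // mulrC phiZ // mulrC.
Qed.

Definition trace_ideal (t : R) : Prop :=
  exists s : seq (R * K * R),
    {in s, forall p, I p.2} /\ t = \sum_(p <- s) p.1.1 * phi p.1.2 p.2.

Lemma trace_ideal_is_ideal : is_ideal trace_ideal.
Proof.
split=> [|_ _ [s [Is ->]] [s' [Is' ->]]|r _ [s [Is ->]]].
- by exists [::]; rewrite big_nil.
- exists (s ++ s'); rewrite big_cat; split=> // p.
  by rewrite mem_cat => /orP[/Is|/Is'].
- exists [seq (r * p.1.1, p.1.2, p.2) | p <- s]; split.
    by move=> _ /mapP[p /Is Ip ->].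
  by rewrite big_map mulr_sumr; apply: eq_bigr => p _; rewrite mulrA.
Qed.

Lemma fg_of_trace_ideal1 : trace_ideal 1 -> fg_ideal I.
Proof.
move=> [s [Is one_s]]; pose p_ := tnth (in_tuple s).
have Ip i : I (p_ i).2 by apply/Is/mem_tnth.
exists (size s), (fun i => (p_ i).2); split=> // x Ix.
exists (fun i => (p_ i).1.1 * phi (p_ i).1.2 x).
rewrite -[LHS]mul1r one_s mulr_suml big_tnth.
by apply: eq_bigr => i _; rewrite -!mulrA dual_basis_swap.
Qed.

Lemma trace_ideal_annihilates a : I a ->
  exists2 t, trace_ideal t & (1 - t) * (a * a) = 0.
Proof.
move=> Ia; case: (basis) => e_in _ /(_ a Ia)[s a_s].
exists (\sum_(k <- s) phi k (e k)).
  exists [seq (1, k, e k) | k <- s]; split.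
    by move=> _ /mapP[k _ ->]; apply: e_in.
  by rewrite big_map; apply: eq_bigr => k _; rewrite mul1r.
apply/eqP; rewrite mulrBl mul1r subr_eq0 [X in X * _ == _]a_s !mulr_suml.
by apply/eqP/eq_bigr => k _; rewrite mulrA dual_basis_swap ?e_in.
Qed.

End DualBasis.

Lemma mulr_exprD_eq0 (R : comPzRingType) (u v x y : R) n m :
  u * x ^+ n = 0 -> v * y ^+ m = 0 -> u * v * (x + y) ^+ (n + m) = 0.
Proof.
move=> ux0 vy0; rewrite exprDn mulr_sumr big1 // => i _.
rewrite mulrnAr; suff -> : u * v * (x ^+ (n + m - i) * y ^+ i) = 0.
  by rewrite mul0rn.
have [le_mi|lt_im] := leqP m i.
  have -> : y ^+ i = y ^+ m * y ^+ (i - m) by rewrite -exprD subnKC.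
  transitivity (v * y ^+ m * (u * x ^+ (n + m - i) * y ^+ (i - m))); first ring.
  by rewrite vy0 mul0r.
have -> : x ^+ (n + m - i) = x ^+ n * x ^+ (m - i).
  by rewrite -exprD addnBA // ltnW.
transitivity (u * x ^+ n * (v * x ^+ (m - i) * y ^+ i)); first ring.
by rewrite ux0 mul0r.
Qed.

Definition mul_closed (R : comPzRingType) (U : R -> Prop) : Prop :=
  forall a b, U a -> U b -> U (a * b).

Lemma mul_closed_expr (R : comPzRingType) (U : R -> Prop) x n :
  mul_closed U -> U 1 -> U x -> U (x ^+ n).
Proof.
by move=> UM U1 Ux; elim: n => [|n IHn]; rewrite ?expr0 // exprS; apply: UM.
Qed.

Section MaximalMulClosed.
Variables (R : comPzRingType) (A : R -> Prop).
Hypotheses (A1 : A 1) (AM : mul_closed A) (A0 : ~ A 0).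
Hypothesis Amax : forall B, mul_closed B -> ~ B 0 -> A `<=` B -> B `<=` A.

Lemma max_mul_closedPn x : ~ A x <-> exists u n, A u /\ u * x ^+ n = 0.
Proof.
split=> [notAx|[u [n [Au ux0]]] Ax]; last first.
  by apply: A0; rewrite -ux0; apply: AM => //; apply: mul_closed_expr.
pose B y := exists u n, A u /\ y = u * x ^+ n.
have [[u [n [Au /esym ux0]]]|notB0] := pselect (B 0); first by exists u, n.
exfalso; apply/notAx/(Amax (B := B)) => //.
- move=> _ _ [u [n [Au ->]]] [v [m [Av ->]]].
  by exists (u * v), (n + m); rewrite exprD mulrACA; split; first exact: AM.
- by move=> y Ay; exists y, 0%N; rewrite expr0 mulr1.
- by exists 1, 1%N; rewrite expr1 mul1r.
Qed.

Lemma prime_ideal_max_mul_closed : prime_ideal (fun x => ~ A x).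
Proof.
split=> [|notA1|a b notAab]; last 2 first.
- exact: notA1 A1.
- have [Aa|] := pselect (A a); last by left.
  by right=> Ab; apply/notAab/AM.
split=> // [x y|a x].
  move=> /max_mul_closedPn[u [n [Au ux0]]] /max_mul_closedPn[v [m [Av vy0]]].
  apply/max_mul_closedPn; exists (u * v), (n + m); split; first exact: AM.
  exact: mulr_exprD_eq0.
move=> /max_mul_closedPn[u [n [Au ux0]]]; apply/max_mul_closedPn.
by exists u, n; rewrite exprMn mulrCA ux0 mulr0.
Qed.

Lemma minimal_prime_max_mul_closed : minimal_prime (fun x => ~ A x).
Proof.
split=> [|Q [[Q0 _ _] _ Qprime] QA x notAx].
  exact: prime_ideal_max_mul_closed.
have [//|notQx] := pselect (Q x); exfalso.
apply/notAx/(Amax (B := fun y => ~ Q y)) => //.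
- by move=> a b notQa notQb /Qprime[].
- by move=> y Ay /QA.
Qed.

End MaximalMulClosed.

Lemma exists_max_mul_closed (R : comPzRingType) (S : R -> Prop) :
  S 1 -> mul_closed S -> ~ S 0 ->
  exists2 A, S `<=` A & [/\ A 1, mul_closed A, ~ A 0 &
    forall B, mul_closed B -> ~ B 0 -> A `<=` B -> B `<=` A].
Proof.
move=> S1 SM S0.
(* The third condition lets the empty chain have an upper bound, namely set0. *)
pose P (U : set R) := [/\ mul_closed U, ~ U 0 & U !=set0 -> S `<=` U].
have [A [[AM A0 AS] Amax]] : exists A, P A /\ forall B, A `<` B -> ~ P B.
  apply: Zorn_bigcup => F FP Ftot; split.
  - move=> a b [X FX Xa] [Y FY Yb].
    have [XY|YX] := Ftot X Y FX FY.
    + by exists Y => //; case: (FP Y FY) => YM _ _; apply: YM => //; apply: XY.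
    + by exists X => //; case: (FP X FX) => XM _ _; apply: XM => //; apply: YX.
  - by move=> [X FX X0]; case: (FP X FX).
  - move=> [x [X FX Xx]] s Ss; exists X => //.
    by case: (FP X FX) => _ _ XS; apply: XS; [exists x|].
have SA : S `<=` A.
  have [[a Aa]|A_empty] := pselect (A !=set0); first by apply: AS; exists a.
  move=> s Ss; exfalso; apply: (Amax S); last by split=> // _; exact.
  by split=> [x Ax|/(_ 1 S1) A1]; exfalso; apply: A_empty; [exists x|exists 1].
exists A => //; split=> // [|B BM B0 AB]; first exact: SA.
have [//|notBA] := pselect (B `<=` A).
exfalso; apply: (Amax B) => //; split=> // _.
exact: subset_trans AB.
Qed.

Lemma exists_minimal_prime_disjoint (R : comPzRingType) (S : R -> Prop) :
  S 1 -> mul_closed S -> ~ S 0 ->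
  exists2 P, minimal_prime P & forall s, S s -> ~ P s.
Proof.
move=> S1 SM S0; have [A SA [A1 AM A0 Amax]] := exists_max_mul_closed S1 SM S0.
exists (fun x => ~ A x); first exact: minimal_prime_max_mul_closed.
by move=> s /SA As; apply.
Qed.

Lemma exists_minimal_prime_disjoint_1B (R : comPzRingType) (J : R -> Prop) :
  is_ideal J -> ~ J 1 ->
  exists2 P, minimal_prime P & forall t, J t -> ~ P (1 - t).
Proof.
case=> J0 JD JM notJ1; pose S s := exists2 t, J t & s = 1 - t.
have S1 : S 1 by exists 0; rewrite ?subr0.
have SM : mul_closed S.
  move=> _ _ [t Jt ->] [t' Jt' ->]; exists (t + t' - t * t'); last by ring.
  by apply: JD (JD _ _ Jt Jt') _; rewrite -mulN1r; apply/JM/JM.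
have S0 : ~ S 0.
  move=> [t Jt /eqP]; rewrite eq_sym subr_eq0 => /eqP t1.
  by apply: notJ1; rewrite t1.
have [P Pmin PS] := exists_minimal_prime_disjoint S1 SM S0.
by exists P => // t Jt; apply: PS; exists t.
Qed.

Theorem corollary3p8 (R : comPzRingType) (I : R -> Prop) :
  is_ideal I ->
  (forall P : R -> Prop, minimal_prime P -> ~ (forall x, I x -> P x)) ->
  projective_ideal I ->
  fg_ideal I.
Proof.
move=> idealI I_notin_minimal projI.
have [K [e [phi basis]]] := projective_ideal_dual_basis idealI projI.
have [/(fg_of_trace_ideal1 basis)//|trace_proper] :=
  pselect (trace_ideal I phi 1).
have [P Pmin P_avoids] :=
  exists_minimal_prime_disjoint_1B (trace_ideal_is_ideal I phi) trace_proper.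
exfalso; apply: (I_notin_minimal P Pmin) => a Ia.
have [t trace_t ann_t] := trace_ideal_annihilates basis Ia.
have [[P0 _ _] _ Pprime] := Pmin.1.
have : P ((1 - t) * (a * a)) by rewrite ann_t.
by case/Pprime=> [/(P_avoids t trace_t)|/Pprime[]].
Qed.
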